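(* Let $m\ge2$ be an integer. Every element $q$ of $\mathbb{Q}_m$ can be represented as $q=\sum_{k=0}^\infty \left(\frac{m}{m+1}\right)^k s_k$ (convergence in $\mathbb{Q}_m$) for a unique sequence $\{s_k\}_{k\ge0}$ with each $s_k\in\{0,1,\dots,m-1\}$.
   Context: $D_m$ is the set of rationals $a/b$ (with $a,b$ coprime integers) such that $\gcd(b,m)=1$; it is a subring of $\mathbb{Q}$ containing $\frac{m}{m+1}$. For $a/b\in D_m$ in lowest terms, $|a/b|_m=m^{-k}$ where $k$ is the largest integer with $m^k\mid a$, and $|0|_m=0$; the metric is $d(u,v)=|u-v|_m$, making $D_m$ a topological ring. $\mathbb{Q}_m$ is the Cauchy completion of $(D_m,d)$, with ring operations and the norm extended by continuity; $D_m$ is identified with its image in $\mathbb{Q}_m$. *)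

From mathcomp Require Import all_boot all_order all_algebra.
Set Implicit Arguments. Unset Strict Implicit. Unset Printing Implicit Defensive.
Import Order.TTheory GRing.Theory Num.Theory.
Local Open Scope ring_scope.

Definition inDm (m : nat) (x : rat) : bool := coprime `|denq x|%N m.

(* largest k with m^k | a  (for a > 0 and m >= 2 such k satisfies k <= a) *)
Definition mval (m a : nat) : nat := (\max_(k < a.+1 | m ^ k %| a) k)%N.

Definition mnorm (m : nat) (x : rat) : rat :=
  if x == 0 then 0 else ((m%:R)^-1) ^+ (mval m `|numq x|%N).

Definition mdist (m : nat) (u v : rat) : rat := mnorm m (u - v).

Definition cauchyDm (m : nat) (u : nat -> rat) : Prop :=
  (forall n, inDm m (u n)) /\
  forall eps : rat, 0 < eps -> exists N : nat, forall i j : nat,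
      (N <= i)%N -> (N <= j)%N -> mdist m (u i) (u j) < eps.

(* Q_m: the Cauchy completion of D_m; an element is represented by a
   Cauchy sequence (two representatives are the same point iff their
   distance is 0). *)
Record Qm (m : nat) := MkQm { Qm_seq :> nat -> rat ; Qm_cauchy : cauchyDm m Qm_seq }.

Definition embD (x : rat) : nat -> rat := fun _ => x.

(* "d_{Q_m}(x, y) < eps" where d_{Q_m}(x,y) = lim_n d(x_n, y_n):
   unfolded as: eventually d(x_n, y_n) < eps *)
Definition dQm_lt (m : nat) (x y : nat -> rat) (eps : rat) : Prop :=
  exists n0 : nat, forall n : nat, (n0 <= n)%N -> mdist m (x n) (y n) < eps.

Definition Qm_cvg (m : nat) (a : nat -> nat -> rat) (q : nat -> rat) : Prop :=
  forall eps : rat, 0 < eps -> exists N0 : nat, forall N : nat,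
      (N0 <= N)%N -> dQm_lt m (a N) q eps.

Definition digit_psum (m : nat) (s : nat -> nat) (N : nat) : rat :=
  \sum_(k < N) ((m%:R / (m.+1)%:R) ^+ k * (s k)%:R).

Definition digit_series_to (m : nat) (s : nat -> nat) (q : Qm m) : Prop :=
  Qm_cvg m (fun N => embD (digit_psum m s N)) q.

(* Put r = m/(m+1), which is m times a unit of D_m.  Since D_m/mD_m is Z/mZ,
   every x in D_m is congruent modulo mD_m to exactly one digit s < m, and then
   (x - s)/r lies in D_m again.  Iterating, x minus the N-th partial sum of its
   digit series lies in r^N D_m = m^N D_m; conversely two digit strings whose
   partial sums agree modulo m^K share their first K digits.  As |x|_m <= m^-K
   exactly when x is in m^K D_m, the terms of a Cauchy sequence eventually share
   any given number of leading digits; these limiting digits give the expansion,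
   and any two expansions of q have partial sums agreeing modulo arbitrarily high
   powers of m, hence coincide. *)

From HB Require Import structures.
From mathcomp Require Import all_boot all_order all_algebra.
From mathcomp Require Import ring zify.
From Stdlib Require Import ClassicalEpsilon FunctionalExtensionality.
Set Implicit Arguments.
Unset Strict Implicit.
Unset Printing Implicit Defensive.

Import Order.TTheory GRing.Theory Num.Theory.
Local Open Scope ring_scope.

Lemma leq_mval m a k : (1 < m)%N -> (0 < a)%N -> (k <= mval m a)%N = (m ^ k %| a)%N.
Proof.
move=> m_gt1 a_gt0; apply/idP/idP => [le_k|dvd_k]; last first.
  have lt_k : (k < a.+1)%N.
    rewrite ltnS; apply: leq_trans (ltnW (ltn_expl k m_gt1)) _; exact: dvdn_leq.
  exact: (@leq_bigmax_cond _ (fun i : 'I_a.+1 => m ^ i %| a)%N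
    (fun i => nat_of_ord i) (Ordinal lt_k)).
apply: dvdn_trans (dvdn_exp2l _ le_k) _; rewrite /mval.
elim/big_ind: _ => // i j dvd_i dvd_j.
by case/orP: (leq_total i j) => [/maxn_idPr|/maxn_idPl] ->.
Qed.

Section Dm.
Variable m : nat.

Definition Dm : {pred rat} := inDm m.

Lemma DmP x :
  reflect (exists (a : int) (b : nat), [/\ (0 < b)%N, coprime b m & x = a%:~R / b%:R])
    (x \in Dm).
Proof.
apply: (iffP idP) => [x_Dm|[a [b [b_gt0 cop_bm x_ab]]]].
  exists (numq x), `|denq x|%N; split => //; first by rewrite absz_gt0 denq_neq0.
  by rewrite natr_absz gtr0_norm ?denq_gt0 // divq_num_den.
have b_neq0 : (b%:R : rat) != 0 by rewrite pnatr_eq0 -lt0n.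
have den_neq0 : ((denq x)%:~R : rat) != 0 by rewrite intr_eq0 denq_neq0.
have num_den : numq x * b%:Z = a * denq x.
  apply: (@intr_inj rat); rewrite !intrM -pmulrn.
  have num_x : (numq x)%:~R = x * (denq x)%:~R :> rat.
    by rewrite -{2}(divq_num_den x) divfK.
  by rewrite num_x x_ab mulrAC divfK // mulrC.
rewrite /Dm /inDm; apply: coprime_dvdl cop_bm.
rewrite -(Gauss_dvdr _ (_ : coprime `|denq x| `|numq x|)); last first.
  by rewrite coprime_sym coprime_num_den.
have := congr1 absz num_den; rewrite !abszM /= => ->; exact: dvdn_mull.
Qed.

Lemma Dm_subring_closed : subring_closed Dm.
Proof.
split; first by apply/DmP; exists 1, 1%N; rewrite coprime1n divr1.
- move=> _ _ /DmP[a [b [b_gt0 cop_b ->]]] /DmP[c [d [d_gt0 cop_d ->]]].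
  have b_neq0 : (b%:R : rat) != 0 by rewrite pnatr_eq0 -lt0n.
  have d_neq0 : (d%:R : rat) != 0 by rewrite pnatr_eq0 -lt0n.
  apply/DmP; exists (a * d%:Z - c * b%:Z), (b * d)%N.
  split; [by rewrite muln_gt0 b_gt0 | by rewrite coprimeMl cop_b |].
  by rewrite intrB !intrM natrM !pmulrn; field; rewrite b_neq0 d_neq0.
- move=> _ _ /DmP[a [b [b_gt0 cop_b ->]]] /DmP[c [d [d_gt0 cop_d ->]]].
  apply/DmP; exists (a * c), (b * d)%N.
  split; [by rewrite muln_gt0 b_gt0 | by rewrite coprimeMl cop_b |].
  by rewrite intrM natrM mulf_div.
Qed.

HB.instance Definition _ := GRing.isSubringClosed.Build rat Dm Dm_subring_closed.

Lemma Dm_invn n : coprime n m -> n%:R^-1 \in Dm.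
Proof.
move=> cop_n; have [->|n_gt0] := posnP n; first by rewrite invr0 rpred0.
by apply/DmP; exists 1, n; rewrite mul1r.
Qed.

(* The ideal m^K D_m, as long as m > 0. *)
Definition mpowDm K : {pred rat} := [pred x | x / m%:R ^+ K \in Dm].

Lemma mpowDm_zmod_closed K : zmod_closed (mpowDm K).
Proof.
split=> [|x y]; rewrite !inE ?mul0r ?rpred0 // => x_K y_K.
by rewrite mulrBl rpredB.
Qed.

HB.instance Definition _ K := GRing.isZmodClosed.Build rat (mpowDm K) (mpowDm_zmod_closed K).

Lemma mpowDm0 x : (x \in mpowDm 0) = (x \in Dm).
Proof. by rewrite inE expr0 divr1. Qed.

End Dm.

Section Adic.
Variable m : nat.
Hypothesis m_gt1 : (1 < m)%N.

Local Notation r := (m%:R / (m.+1)%:R : rat).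

Lemma natm_neq0 : (m%:R : rat) != 0.
Proof. by rewrite pnatr_eq0 -lt0n (ltnW m_gt1). Qed.

Lemma mpowDm_le K L x : (K <= L)%N -> x \in mpowDm m L -> x \in mpowDm m K.
Proof.
move=> le_KL; rewrite !inE -(subnKC le_KL) exprD invfM mulrA => x_L.
rewrite -(divfK (expf_neq0 (L - K) natm_neq0) (x / _)).
by rewrite rpredM ?rpredX ?rpred_nat.
Qed.

Lemma mpowDm_Dm K x : x \in mpowDm m K -> x \in Dm m.
Proof. by rewrite -mpowDm0; apply: mpowDm_le. Qed.

Lemma mpowDmS_ratioM K x : (r * x \in mpowDm m K.+1) = (x \in mpowDm m K).
Proof.
have m1_neq0 : ((m.+1)%:R : rat) != 0 by rewrite pnatr_eq0.
rewrite !inE; have -> : r * x / m%:R ^+ K.+1 = (m.+1)%:R^-1 * (x / m%:R ^+ K).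
  by rewrite exprS; field; rewrite expf_neq0 ?natm_neq0 // addrC natr1 m1_neq0.
apply/idP/idP => x_K; last by rewrite rpredM // Dm_invn ?coprimeSn.
by rewrite -[x / _](mulVKf m1_neq0) rpredM ?rpred_nat.
Qed.

Lemma mpowDm_numq K x : x \in Dm m -> (x \in mpowDm m K) = (m ^ K %| `|numq x|)%N.
Proof.
move=> x_Dm; have den_neq0 : ((denq x)%:~R : rat) != 0 by rewrite intr_eq0 denq_neq0.
have num_x : (numq x)%:~R = x * (denq x)%:~R :> rat by rewrite -{2}(divq_num_den x) divfK.
have mK_neq0 : (m%:R ^+ K : rat) != 0 by rewrite expf_neq0 ?natm_neq0.
apply/idP/idP => [/DmP[a [b [b_gt0 cop_b x_ab]]]|dvd_K].
  have b_neq0 : (b%:R : rat) != 0 by rewrite pnatr_eq0 -lt0n.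
  have num_eq : numq x * b%:Z = (m ^ K)%N%:Z * a * denq x.
    apply: (@intr_inj rat); rewrite !intrM -!pmulrn natrX num_x.
    by rewrite -(divfK mK_neq0 x) x_ab; field.
  have cop_mKb : coprime (m ^ K) b by rewrite coprimeXl // coprime_sym.
  rewrite -(Gauss_dvdl _ cop_mKb); have := congr1 absz num_eq.
  by rewrite !abszM /= => ->; rewrite -mulnA dvdn_mulr.
have dvdz_K : ((m ^ K)%N%:Z %| numq x)%Z by rewrite dvdzE.
rewrite inE; have -> : x / m%:R ^+ K = (numq x %/ (m ^ K)%N%:Z)%Z%:~R * (`|denq x|%N%:R)^-1.
  rewrite natr_absz gtr0_norm ?denq_gt0 // -{1}(divq_num_den x) -{1}(divzK dvdz_K).
  by rewrite intrM -pmulrn natrX mulrAC mulfK.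
by rewrite rpredM ?rpred_int ?Dm_invn.
Qed.

Lemma minv_gt0 : (0 : rat) < m%:R^-1.
Proof. by rewrite invr_gt0 ltr0n (ltnW m_gt1). Qed.

Lemma minv_lt1 : (m%:R^-1 : rat) < 1.
Proof. by rewrite invf_lt1 ?ltr0n ?(ltnW m_gt1) // ltr1n. Qed.

Lemma mpowDm_mval K x : x \in Dm m -> x != 0 ->
  (x \in mpowDm m K) = (K <= mval m `|numq x|)%N.
Proof. by move=> x_Dm x_neq0; rewrite mpowDm_numq // leq_mval // absz_gt0 numq_eq0. Qed.

Lemma mnorm_le_mpowDm K x : x \in Dm m ->
  (mnorm m x <= m%:R^-1 ^+ K) = (x \in mpowDm m K).
Proof.
move=> x_Dm; rewrite /mnorm; case: eqP => [->|/eqP x_neq0].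
  by rewrite rpred0 exprn_ge0 // ltW // minv_gt0.
by rewrite ler_iXn2l ?minv_gt0 ?minv_lt1 // mpowDm_mval.
Qed.

Lemma mnorm_lt_mpowDm K x : x \in Dm m ->
  (mnorm m x < m%:R^-1 ^+ K) = (x \in mpowDm m K.+1).
Proof.
move=> x_Dm; rewrite /mnorm; case: eqP => [->|/eqP x_neq0].
  by rewrite rpred0 exprn_gt0 // minv_gt0.
by rewrite ltr_iXn2l ?minv_gt0 ?minv_lt1 // mpowDm_mval.
Qed.

Lemma residue_exists x : x \in Dm m -> exists2 s, (s < m)%N & x - s%:R \in mpowDm m 1.
Proof.
case/DmP=> [a [b [b_gt0 cop_bm ->]]].
have b_neq0 : (b%:R : rat) != 0 by rewrite pnatr_eq0 -lt0n.
have [u [v uv_eq]] := Bezoutz b%:Z m%:Z.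
have bezout : u * b%:Z + v * m%:Z = 1 by rewrite uv_eq /gcdz /= (eqP cop_bm).
set s := ((a * u) %% m%:Z)%Z.
have m_gt0 : (0 < m)%N := ltnW m_gt1.
have s_ge0 : 0 <= s by rewrite modz_ge0 // eqz_nat -lt0n.
exists `|s|%N; first by rewrite -ltz_nat gez0_abs // ltz_pmod // ltz_nat.
have a_sb : a - s * b%:Z = m%:Z * (a * v + ((a * u) %/ m%:Z)%Z * b%:Z).
  have a_eq : a = a * (u * b%:Z + v * m%:Z) by rewrite bezout mulr1.
  by rewrite /s /modz {1}a_eq; ring.
set c := (a * v + _)%Z in a_sb.
have a_sbR : a%:~R - s%:~R * b%:R = m%:R * c%:~R :> rat.
  by have := congr1 (intr : int -> rat) a_sb; rewrite intrB !intrM !pmulrn.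
rewrite inE expr1 natr_absz ger0_norm //.
have -> : (a%:~R / b%:R - s%:~R) / m%:R = c%:~R / (b%:R : rat).
  apply: (mulfI natm_neq0); rewrite [RHS]mulrA -a_sbR.
  by field; rewrite b_neq0 natm_neq0.
by rewrite rpredM ?rpred_int ?Dm_invn.
Qed.

Lemma residue_unique s t : (s < m)%N -> (t < m)%N -> s%:R - t%:R \in mpowDm m 1 -> s = t.
Proof.
move=> s_lt t_lt; have -> : s%:R - t%:R = (s%:Z - t%:Z)%:~R :> rat by rewrite intrB.
rewrite mpowDm_numq ?rpred_int // numq_int expn1 => dvd_st.
have : (`|s%:Z - t%:Z| < m)%N by lia.
case: (posnP `|s%:Z - t%:Z|) => [|st_gt0]; first by lia.
by rewrite ltnNge dvdn_leq.
Qed.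

Lemma Dm_ratio : r \in Dm m.
Proof. by rewrite rpredM ?rpred_nat ?Dm_invn ?coprimeSn. Qed.

Lemma mpowDm_ratioX N y : y \in Dm m -> r ^+ N * y \in mpowDm m N.
Proof.
move=> y_Dm; elim: N => [|N IH]; first by rewrite expr0 mul1r mpowDm0.
by rewrite exprS -mulrA mpowDmS_ratioM.
Qed.

Definition digit (x : rat) : nat :=
  epsilon (inhabits 0%N) (fun s => (s < m)%N /\ x - s%:R \in mpowDm m 1).

Definition shift (x : rat) : rat := (x - (digit x)%:R) / r.

Definition digits (x : rat) (k : nat) : nat := digit (iter k shift x).

Lemma digitP x : x \in Dm m -> (digit x < m)%N /\ x - (digit x)%:R \in mpowDm m 1.
Proof.
case/residue_exists => s s_lt s_res.
exact: (epsilon_spec _ (fun s => _ /\ _) (ex_intro _ s (conj s_lt s_res))).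
Qed.

Lemma ratio_neq0 : r != 0.
Proof. by rewrite mulf_neq0 ?invr_eq0 ?natm_neq0 ?pnatr_eq0. Qed.

Lemma digit_shift x : x = (digit x)%:R + r * shift x.
Proof. by rewrite /shift mulrC divfK ?ratio_neq0 // addrC subrK. Qed.

Lemma shift_Dm x : x \in Dm m -> shift x \in Dm m.
Proof.
move=> /digitP[_ x_res]; rewrite -mpowDm0 -mpowDmS_ratioM.
by rewrite {1}(digit_shift x) addrC addKr in x_res.
Qed.

Lemma iter_shift_Dm k x : x \in Dm m -> iter k shift x \in Dm m.
Proof. by move=> x_Dm; elim: k => //= k; apply: shift_Dm. Qed.

Lemma digits_lt x k : x \in Dm m -> (digits x k < m)%N.
Proof. by move=> x_Dm; case: (digitP (@iter_shift_Dm k x x_Dm)). Qed.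

Lemma digit_psum_Dm s N : digit_psum m s N \in Dm m.
Proof. by apply: rpred_sum => k _; rewrite rpredM ?rpredX ?rpred_nat ?Dm_ratio. Qed.

Lemma digit_psumS s N :
  digit_psum m s N.+1 = (s 0%N)%:R + r * digit_psum m (fun k => s k.+1) N.
Proof.
rewrite /digit_psum big_ord_recl expr0 mul1r mulr_sumr; congr (_ + _).
by apply: eq_bigr => k _; rewrite exprS mulrA.
Qed.

Lemma digit_psum_rem x N : x - digit_psum m (digits x) N = r ^+ N * iter N shift x.
Proof.
elim: N x => [|N IH] x; first by rewrite /digit_psum big_ord0 subr0 expr0 mul1r.
have -> : digit_psum m (digits x) N.+1 = (digit x)%:R + r * digit_psum m (digits (shift x)) N.
  by rewrite digit_psumS; congr (_ + _ * _); apply: eq_bigr => k _; rewrite /digits iterSr.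
by rewrite iterSr exprS -mulrA -IH {1}(digit_shift x); ring.
Qed.

Lemma digit_psum_inj K N s t : (K <= N)%N ->
  (forall k, s k < m)%N -> (forall k, t k < m)%N ->
  digit_psum m s N - digit_psum m t N \in mpowDm m K -> forall k, (k < K)%N -> s k = t k.
Proof.
elim: K N s t => [//|K IH] [//|N] s t le_KN s_lt t_lt; rewrite !digit_psumS.
set D := digit_psum m (fun k => s k.+1) N - digit_psum m (fun k => t k.+1) N.
have -> : (s 0%N)%:R + r * digit_psum m (fun k => s k.+1) N
    - ((t 0%N)%:R + r * digit_psum m (fun k => t k.+1) N) = (s 0%N)%:R - (t 0%N)%:R + r * D.
  by rewrite /D; ring.
move=> diff_K.
have rD_1 : r * D \in mpowDm m 1 by rewrite mpowDmS_ratioM mpowDm0 rpredB ?digit_psum_Dm.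
have st0 : s 0%N = t 0%N.
  apply: residue_unique => //; rewrite -(addrK (r * D) (_ - _)) rpredB //.
  exact: mpowDm_le diff_K.
rewrite st0 subrr add0r mpowDmS_ratioM in diff_K.
case=> [_|k lt_kK]; first exact: st0.
exact: (IH N (fun k => s k.+1) (fun k => t k.+1)).
Qed.

Lemma digits_congr K x y : x \in Dm m -> y \in Dm m -> x - y \in mpowDm m K ->
  forall k, (k < K)%N -> digits x k = digits y k.
Proof.
move=> x_Dm y_Dm xy_K; apply: (digit_psum_inj (leqnn K)) => [k|k|].
- exact: digits_lt.
- exact: digits_lt.
have -> : digit_psum m (digits x) K - digit_psum m (digits y) K
    = (x - y) - ((x - digit_psum m (digits x) K) - (y - digit_psum m (digits y) K)) by ring.
by rewrite !digit_psum_rem rpredB // rpredB // mpowDm_ratioX // iter_shift_Dm.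
Qed.

Lemma minv_expn_lt eps : 0 < eps -> exists N, (m%:R^-1 : rat) ^+ N < eps.
Proof.
move=> eps_gt0; set N := Num.Def.archi_bound eps^-1; exists N.
have mN_gt0 : (0 : rat) < m%:R ^+ N by rewrite exprn_gt0 // ltr0n (ltnW m_gt1).
have inv_lt : eps^-1 < N%:R by apply: archi_boundP; rewrite invr_ge0 ltW.
rewrite exprVn invf_plt ?posrE //; apply: lt_le_trans inv_lt _.
by rewrite -natrX ler_nat ltnW // ltn_expl.
Qed.

Section Completion.
Variable q : Qm m.

Lemma Qm_Dm n : q n \in Dm m.
Proof. exact: (Qm_cauchy q).1. Qed.

Lemma Qm_cauchy_mpowDm K :
  exists N, forall i j, (N <= i)%N -> (N <= j)%N -> q i - q j \in mpowDm m K.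
Proof.
have [_ q_cauchy] := Qm_cauchy q.
have [N N_P] := q_cauchy _ (exprn_gt0 K minv_gt0); exists N => i j le_Ni le_Nj.
apply: (mpowDm_le (leqnSn K)); rewrite -mnorm_lt_mpowDm ?rpredB ?Qm_Dm //.
exact: N_P.
Qed.

Lemma Qm_digits_stable : exists s : nat -> nat,
  forall K, exists n0, forall n, (n0 <= n)%N -> forall k, (k < K)%N -> digits (q n) k = s k.
Proof.
have [nK nK_P] := choice _ Qm_cauchy_mpowDm.
exists (fun k => digits (q (nK k.+1)) k) => K.
exists (\max_(k < K) nK k.+1)%N => n le_n k lt_kK.
have le_kn : (nK k.+1 <= n)%N.
  exact: leq_trans (@leq_bigmax _ (fun i : 'I_K => nK i.+1) (Ordinal lt_kK)) le_n.
exact: digits_congr (Qm_Dm _) (Qm_Dm _) (nK_P _ _ _ le_kn (leqnn _)) _ (ltnSn k).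
Qed.

Lemma digit_series_exists : exists2 s, (forall k, s k < m)%N & digit_series_to s q.
Proof.
have [s s_P] := Qm_digits_stable; exists s.
  move=> k; have [n0 n0_P] := s_P k.+1.
  by rewrite -(n0_P n0 (leqnn _) k (ltnSn k)) digits_lt ?Qm_Dm.
move=> eps eps_gt0; have [N0 N0_P] := minv_expn_lt eps_gt0.
exists N0 => N le_N; have [n0 n0_P] := s_P N; exists n0 => n le_n.
have -> : digit_psum m s N = digit_psum m (digits (q n)) N.
  by apply: eq_bigr => k _; rewrite n0_P.
have rem_N := mpowDm_ratioX N (iter_shift_Dm N (Qm_Dm n)).
rewrite /mdist /embD -opprB digit_psum_rem.
apply: le_lt_trans (_ : _ <= m%:R^-1 ^+ N) _.
  by rewrite mnorm_le_mpowDm ?rpredN // (mpowDm_Dm rem_N).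
by apply: le_lt_trans N0_P; rewrite ler_iXn2l ?minv_gt0 ?minv_lt1.
Qed.

Lemma digit_series_unique s t : (forall k, s k < m)%N -> (forall k, t k < m)%N ->
  digit_series_to s q -> digit_series_to t q -> s =1 t.
Proof.
move=> s_lt t_lt s_q t_q k.
have [Ns Ns_P] := s_q _ (exprn_gt0 k minv_gt0).
have [Nt Nt_P] := t_q _ (exprn_gt0 k minv_gt0).
set N := maxn k.+1 (maxn Ns Nt).
have [ns ns_P] := Ns_P N (leq_trans (leq_maxl _ _) (leq_maxr _ _)).
have [nt nt_P] := Nt_P N (leq_trans (leq_maxr _ _) (leq_maxr _ _)).
set n := maxn ns nt.
have s_k : digit_psum m s N - q n \in mpowDm m k.+1.
  rewrite -mnorm_lt_mpowDm ?(rpredB (digit_psum_Dm _ _) (Qm_Dm _)) //.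
  exact: ns_P (leq_maxl _ _).
have t_k : digit_psum m t N - q n \in mpowDm m k.+1.
  rewrite -mnorm_lt_mpowDm ?(rpredB (digit_psum_Dm _ _) (Qm_Dm _)) //.
  exact: nt_P (leq_maxr _ _).
apply: (@digit_psum_inj _ N _ _ (leq_maxl _ _) s_lt t_lt _ _ (ltnSn k)).
have -> : digit_psum m s N - digit_psum m t N
    = (digit_psum m s N - q n) - (digit_psum m t N - q n) by ring.
exact: rpredB.
Qed.

End Completion.

End Adic.

Theorem mainTheorem11 (m : nat) (hm : (2 <= m)%N) (q : Qm m) :
  exists! s : nat -> nat, (forall k, (s k < m)%N) /\ digit_series_to s q.
Proof.
have [s s_lt s_q] := digit_series_exists hm q.
exists s; split => // t [t_lt t_q].
by apply: functional_extensionality => k; apply: (digit_series_unique hm s_lt t_lt s_q t_q).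
Qed.
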